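(* Let $\psi^\beta$ be a smooth surface tensor field with one contravariant surface index on the dynamic surface $\Sigma_t$. Then $$\left(\dot\nabla\nabla_\alpha-\nabla_\alpha\dot\nabla\right)\psi^\beta=\dot R^\beta_{\ \alpha\gamma}\,\psi^\gamma+C\,B^\gamma_\alpha\,\nabla_\gamma\psi^\beta ,$$ where the temporal curvature tensor is $$\dot R^\beta_{\ \alpha\gamma}=\partial_t\Gamma^\beta_{\alpha\gamma}+R^\beta_{\ \gamma\alpha\delta}V^\delta-\nabla_\alpha\dot\Gamma^\beta_\gamma .$$
   Context: Setting: $\Sigma_t$ is a smooth one-parameter family of 2-dimensional surfaces in Euclidean 3-space, given by a position vector $\mathbf R(S^1,S^2,t)$ in surface coordinates $S^\alpha$ (Greek indices run over $1,2$; repeated indices are summed). Put $\mathbf S_\alpha=\partial_\alpha\mathbf R$, $S_{\alpha\beta}=\mathbf S_\alpha\cdot\mathbf S_\beta$, $S^{\alpha\beta}$ the inverse metric (used to raise and lower surface indices), $\mathbf S^\alpha=S^{\alpha\beta}\mathbf S_\beta$, $\mathbf N$ the unit normal, $\Gamma^\gamma_{\alpha\beta}=\mathbf S^\gamma\cdot\partial_\alpha\mathbf S_\beta$ the surface Christoffel symbols, and $\nabla_\alpha$ the surface covariant derivative. The curvature tensor is $B_{\alpha\beta}=\mathbf N\cdot\nabla_\alpha\mathbf S_\beta$, so that $\nabla_\alpha\mathbf S_\beta=\mathbf N B_{\alpha\beta}$ and $B^\alpha_\beta=-\mathbf S^\alpha\cdot\nabla_\beta\mathbf N$. The Riemann tensor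 is defined by $(\nabla_\alpha\nabla_\beta-\nabla_\beta\nabla_\alpha)\psi^\gamma=R^\gamma_{\ \delta\alpha\beta}\psi^\delta$. Velocity: $\mathbf V=\partial_t\mathbf R$ (at fixed $S^\alpha$), normal velocity $C=\mathbf V\cdot\mathbf N$, tangential components $V^\alpha=\mathbf V\cdot\mathbf S^\alpha$, so $\mathbf V=C\mathbf N+V^\alpha\mathbf S_\alpha$. The Christoffel time symbol is $\dot\Gamma^\alpha_\beta=\nabla_\beta V^\alpha-C B^\alpha_\beta$. The invariant (tensorial) time derivative $\dot\nabla$ is defined on scalars by $\dot\nabla\psi=\partial_t\psi-V^\alpha\nabla_\alpha\psi$, on surface tensors by $\dot\nabla\psi^\alpha=\partial_t\psi^\alpha-V^\gamma\nabla_\gamma\psi^\alpha+\dot\Gamma^\alpha_\gamma\psi^\gamma$, $\dot\nabla\psi_\alpha=\partial_t\psi_\alpha-V^\gamma\nabla_\gamma\psi_\alpha-\dot\Gamma^\gamma_\alpha\psi_\gamma$ (one such term per index for higher rank), and on vector-valued fields in Euclidean space componentwise in Cartesian coordinates in the same way (e.g. $\dot\nabla\mathbf S_\alpha=\partial_t\mathbf S_\alpha-V^\gamma\nabla_\gamma\mathbf S_\alpha-\dot\Gamma^\gamma_\alpha\mathbf S_\gamma$). In the formula for $\dot R$, $\nabla_\alpha\dot\Gamma^\beta_\gamma$ is computed with the covariant derivative rule for an object with one upper and one lower surface index. *)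

From Stdlib Require Import Reals ClassicalEpsilon List.
Open Scope R_scope.

(* Scalar fields of the three parameters (S^1, S^2, t).  Directions:
   0 = S^1, 1 = S^2, 2 = t.  Surface indices alpha range over {0,1}
   (the paper's 1,2); Cartesian indices i range over {0,1,2}. *)
Definition F3 := R -> R -> R -> R.

Definition line (d : nat) (f : F3) (a b c : R) : R -> R :=
  match d with
  | O => fun x => f x b c
  | S O => fun x => f a x c
  | _ => fun x => f a b x
  end.

Definition coord (d : nat) (a b c : R) : R :=
  match d with O => a | S O => b | _ => c end.

(* the derivative of g at x (an arbitrary value if g is not differentiable there) *)
Definition deriv1 (g : R -> R) (x : R) : R :=
  epsilon (inhabits 0) (fun l => derivable_pt_lim g x l).

Definition pd (d : nat) (f : F3) : F3 :=
  fun a b c => deriv1 (line d f a b c) (coord d a b c).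

Definition has_pd (d : nat) (f : F3) (a b c : R) : Prop :=
  exists l, derivable_pt_lim (line d f a b c) (coord d a b c) l.

Fixpoint iter_pd (ds : list nat) (f : F3) : F3 :=
  match ds with nil => f | d :: ds' => pd d (iter_pd ds' f) end.

Definition cont3_at (f : F3) (a b c : R) : Prop :=
  forall eps, 0 < eps -> exists del, 0 < del /\
    forall x y z, Rabs (x - a) < del -> Rabs (y - b) < del -> Rabs (z - c) < del ->
      Rabs (f x y z - f a b c) < eps.

Definition open3 (U : R -> R -> R -> Prop) : Prop :=
  forall a b c, U a b c -> exists del, 0 < del /\
    forall x y z, Rabs (x - a) < del -> Rabs (y - b) < del -> Rabs (z - c) < del ->
      U x y z.

Definition smooth_on (U : R -> R -> R -> Prop) (f : F3) : Prop :=
  forall ds : list nat, forall a b c, U a b c ->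
    cont3_at (iter_pd ds f) a b c /\
    (forall d, (d < 3)%nat -> has_pd d (iter_pd ds f) a b c).

Definition sum2 (f : nat -> R) : R := f 0%nat + f 1%nat.
Definition sum3 (f : nat -> R) : R := f 0%nat + f 1%nat + f 2%nat.

Section Geometry.
(* X i = i-th Cartesian component of the position vector R(S^1,S^2,t) *)
Variable X : nat -> F3.

Definition Sv (al i : nat) : F3 := pd al (X i).
Definition met (al be : nat) : F3 :=
  fun a b c => sum3 (fun i => Sv al i a b c * Sv be i a b c).
Definition metdet : F3 :=
  fun a b c => met 0 0 a b c * met 1 1 a b c - met 0 1 a b c * met 1 0 a b c.
(* S^{alpha beta}: inverse of the 2x2 metric *)
Definition imet (al be : nat) : F3 :=
  fun a b c =>
    (if Nat.eqb al be then met (1 - al) (1 - al) a b c else - met al be a b c)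
    / metdet a b c.
Definition Sup (al i : nat) : F3 :=
  fun a b c => sum2 (fun be => imet al be a b c * Sv be i a b c).

Definition cross (u v : nat -> R) (i : nat) : R :=
  match i with
  | O => u 1%nat * v 2%nat - u 2%nat * v 1%nat
  | S O => u 2%nat * v 0%nat - u 0%nat * v 2%nat
  | _ => u 0%nat * v 1%nat - u 1%nat * v 0%nat
  end.
Definition crossS (i : nat) : F3 :=
  fun a b c => cross (fun j => Sv 0 j a b c) (fun j => Sv 1 j a b c) i.
Definition Nv (i : nat) : F3 :=
  fun a b c => crossS i a b c / sqrt (sum3 (fun j => crossS j a b c ^ 2)).

(* Christoffel symbols: Chr ga al be = Gamma^ga_{al be} = S^ga . d_al S_be *)
Definition Chr (ga al be : nat) : F3 :=
  fun a b c => sum3 (fun i => Sup ga i a b c * pd al (Sv be i) a b c).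

(* covariant derivatives; w al denotes w^al (covU) or w_al (covL),
   T be ga denotes T^be_ga *)
Definition covU (w : nat -> F3) (al be : nat) : F3 :=
  fun a b c => pd al (w be) a b c + sum2 (fun ga => Chr be al ga a b c * w ga a b c).
Definition covL (w : nat -> F3) (al be : nat) : F3 :=
  fun a b c => pd al (w be) a b c - sum2 (fun ga => Chr ga al be a b c * w ga a b c).
Definition cov11 (T : nat -> nat -> F3) (al be ga : nat) : F3 :=
  fun a b c => pd al (T be ga) a b c
    + sum2 (fun de => Chr be al de a b c * T de ga a b c)
    - sum2 (fun de => Chr de al ga a b c * T be de a b c).

(* B^al_be = - S^al . nabla_be N  (N carries no surface index: nabla_be N = d_be N) *)
Definition Bmix (al be : nat) : F3 :=
  fun a b c => - sum3 (fun i => Sup al i a b c * pd be (Nv i) a b c).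

Definition Vel (i : nat) : F3 := pd 2 (X i).
Definition Cn : F3 := fun a b c => sum3 (fun i => Vel i a b c * Nv i a b c).
Definition Vup (al : nat) : F3 := fun a b c => sum3 (fun i => Vel i a b c * Sup al i a b c).

Definition dotChr (al be : nat) : F3 :=
  fun a b c => covU Vup be al a b c - Cn a b c * Bmix al be a b c.

(* Riemann tensor R^ga_{de al be} (the coordinate expression of
   (nabla_al nabla_be - nabla_be nabla_al) psi^ga = R^ga_{de al be} psi^de) *)
Definition Riem (ga de al be : nat) : F3 :=
  fun a b c => pd al (Chr ga be de) a b c - pd be (Chr ga al de) a b c
    + sum2 (fun om => Chr ga al om a b c * Chr om be de a b c)
    - sum2 (fun om => Chr ga be om a b c * Chr om al de a b c).

Definition dotnabU (w : nat -> F3) (be : nat) : F3 :=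
  fun a b c => pd 2 (w be) a b c
    - sum2 (fun ga => Vup ga a b c * covU w ga be a b c)
    + sum2 (fun ga => dotChr be ga a b c * w ga a b c).

Definition dotnab11 (T : nat -> nat -> F3) (be al : nat) : F3 :=
  fun a b c => pd 2 (T be al) a b c
    - sum2 (fun ga => Vup ga a b c * cov11 T ga be al a b c)
    + sum2 (fun ga => dotChr be ga a b c * T ga al a b c)
    - sum2 (fun ga => dotChr ga al a b c * T be ga a b c).

Definition nablaPsi (psi : nat -> F3) (be al : nat) : F3 := covU psi al be.

Definition dotR (be al ga : nat) : F3 :=
  fun a b c => pd 2 (Chr be al ga) a b c
    + sum2 (fun de => Riem be ga al de a b c * Vup de a b c)
    - cov11 dotChr al be ga a b c.

End Geometry.

From Stdlib Require Import Reals ClassicalEpsilon List Lra Lia.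
From Coquelicot Require Import Coquelicot.
Open Scope R_scope.

(* In coordinates, once the Leibniz rule has been applied to the partial derivatives of the
   products occurring in (dot-nabla nabla_al - nabla_al dot-nabla) psi^be, both sides are
   polynomials in the coefficient fields and their partial derivatives.  The mixed second
   derivatives of psi^be cancel by Schwarz's theorem, and the same theorem applied to the
   position vector makes Gamma^be_{al ga} = S^be . d_al d_ga R symmetric in its lower indices;
   what remains is a ring identity.  The Leibniz rule is justified because Gamma, V^al and
   dot-Gamma are infinitely partially differentiable on U: they are built from the smooth
   position vector by ring operations, division by det S_{al be} = |S_1 x S_2|^2 and the square
   root of that quantity, which does not vanish on U. *)

Definition is_pd (d : nat) (f : F3) (a b c l : R) : Prop :=
  derivable_pt_lim (line d f a b c) (coord d a b c) l.

Lemma line_pt d f a b c : line d f a b c (coord d a b c) = f a b c.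
Proof. destruct d as [|[|d]]; reflexivity. Qed.

Lemma line_map1 (phi : R -> R) d f a b c :
  line d (fun x y z => phi (f x y z)) a b c = fun r => phi (line d f a b c r).
Proof. destruct d as [|[|d]]; reflexivity. Qed.

Lemma line_map2 (op : R -> R -> R) d f g a b c :
  line d (fun x y z => op (f x y z) (g x y z)) a b c
  = fun r => op (line d f a b c r) (line d g a b c r).
Proof. destruct d as [|[|d]]; reflexivity. Qed.

Lemma deriv1_unique g x l : derivable_pt_lim g x l -> deriv1 g x = l.
Proof.
  intro H. apply (uniqueness_limite g x); [|exact H].
  exact (epsilon_spec (inhabits 0) _ (ex_intro _ l H)).
Qed.

Lemma is_pd_unique {d f a b c l} : is_pd d f a b c l -> pd d f a b c = l.
Proof. apply deriv1_unique. Qed.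

Lemma has_pd_is_pd {d f a b c} : has_pd d f a b c -> is_pd d f a b c (pd d f a b c).
Proof. intros [l H]. rewrite (is_pd_unique H). exact H. Qed.

Lemma is_pd_const d k a b c : is_pd d (fun _ _ _ => k) a b c 0.
Proof. unfold is_pd; destruct d as [|[|d]]; apply derivable_pt_lim_const. Qed.

Section PartialDerivativeRules.
Context {d : nat} {f g : F3} {a b c lf lg : R}.
Hypotheses (Hf : is_pd d f a b c lf) (Hg : is_pd d g a b c lg).

Lemma is_pd_plus : is_pd d (fun x y z => f x y z + g x y z) a b c (lf + lg).
Proof. unfold is_pd; rewrite (line_map2 Rplus). exact (derivable_pt_lim_plus _ _ _ _ _ Hf Hg). Qed.

Lemma is_pd_minus : is_pd d (fun x y z => f x y z - g x y z) a b c (lf - lg).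
Proof. unfold is_pd; rewrite (line_map2 Rminus). exact (derivable_pt_lim_minus _ _ _ _ _ Hf Hg). Qed.

Lemma is_pd_mult :
  is_pd d (fun x y z => f x y z * g x y z) a b c (lf * g a b c + f a b c * lg).
Proof.
  unfold is_pd; rewrite (line_map2 Rmult), <- (line_pt d f), <- (line_pt d g).
  exact (derivable_pt_lim_mult _ _ _ _ _ Hf Hg).
Qed.

Lemma is_pd_inv : f a b c <> 0 ->
  is_pd d (fun x y z => / f x y z) a b c (- lf / f a b c ^ 2).
Proof.
  intro Hnz. unfold is_pd; rewrite (line_map1 Rinv), <- (line_pt d f).
  rewrite <- (line_pt d f) in Hnz. apply is_derive_Reals.
  apply (is_derive_inv (line d f a b c)); [apply is_derive_Reals, Hf | exact Hnz].
Qed.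

Lemma is_pd_sqrt : 0 < f a b c ->
  is_pd d (fun x y z => sqrt (f x y z)) a b c (lf / (2 * sqrt (f a b c))).
Proof.
  intro Hpos. unfold is_pd; rewrite (line_map1 sqrt), <- (line_pt d f).
  rewrite <- (line_pt d f) in Hpos. apply is_derive_Reals.
  apply (is_derive_sqrt (line d f a b c)); [apply is_derive_Reals, Hf | exact Hpos].
Qed.

End PartialDerivativeRules.

Section LeibnizRules.
Variables (d : nat) (f g : F3) (a b c : R).
Hypotheses (Hf : has_pd d f a b c) (Hg : has_pd d g a b c).

Lemma pd_plus : pd d (fun x y z => f x y z + g x y z) a b c = pd d f a b c + pd d g a b c.
Proof. exact (is_pd_unique (is_pd_plus (has_pd_is_pd Hf) (has_pd_is_pd Hg))). Qed.

Lemma pd_minus : pd d (fun x y z => f x y z - g x y z) a b c = pd d f a b c - pd d g a b c.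
Proof. exact (is_pd_unique (is_pd_minus (has_pd_is_pd Hf) (has_pd_is_pd Hg))). Qed.

Lemma pd_mult : pd d (fun x y z => f x y z * g x y z) a b c
  = pd d f a b c * g a b c + f a b c * pd d g a b c.
Proof. exact (is_pd_unique (is_pd_mult (has_pd_is_pd Hf) (has_pd_is_pd Hg))). Qed.

End LeibnizRules.

Lemma locally_ball (x r : R) (P : R -> Prop) :
  0 < r -> (forall z, Rabs (z - x) < r -> P z) -> locally x P.
Proof. intros Hr H. exists (mkposreal r Hr). exact H. Qed.

Lemma Rabs_sub_diag_lt r del : 0 < del -> Rabs (r - r) < del.
Proof. rewrite Rminus_diag, Rabs_R0. trivial. Qed.

Lemma is_pd_local U d f g a b c l : open3 U -> U a b c ->
  (forall x y z, U x y z -> f x y z = g x y z) ->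
  is_pd d f a b c l -> is_pd d g a b c l.
Proof.
  intros HU Hp E H. destruct (HU a b c Hp) as [del [Hdel Hball]].
  apply is_derive_Reals. apply (is_derive_ext_loc (line d f a b c)); [|apply is_derive_Reals, H].
  apply (locally_ball _ del); [exact Hdel|]. intros z Hz.
  pose proof (Rabs_sub_diag_lt a del Hdel); pose proof (Rabs_sub_diag_lt b del Hdel);
  pose proof (Rabs_sub_diag_lt c del Hdel).
  destruct d as [|[|d]]; apply E, Hball; assumption.
Qed.

Section InfiniteDifferentiability.
Variable U : R -> R -> R -> Prop.
Hypothesis HU : open3 U.

Fixpoint diff_n (n : nat) (f : F3) : Prop :=
  match n with
  | O => True
  | S n => (forall d a b c, U a b c -> has_pd d f a b c) /\ forall d, diff_n n (pd d f)
  end.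

Definition diff_inf (f : F3) : Prop := forall n, diff_n n f.

Lemma diff_n_S n f : diff_n (S n) f -> diff_n n f.
Proof.
  revert f; induction n as [|n IHn]; intros f [Hf Hpd]; [exact I|].
  split; [exact Hf|]. intro d. apply IHn, Hpd.
Qed.

Lemma diff_n_is_pd n d f a b c :
  diff_n (S n) f -> U a b c -> is_pd d f a b c (pd d f a b c).
Proof. intros [Hf _] Hp. exact (has_pd_is_pd (Hf d a b c Hp)). Qed.

Lemma diff_n_ext n f g :
  (forall x y z, U x y z -> f x y z = g x y z) -> diff_n n f -> diff_n n g.
Proof.
  revert f g; induction n as [|n IHn]; intros f g E Hf; [exact I|].
  split.
  - intros d a b c Hp. exists (pd d f a b c).
    exact (is_pd_local U d f g a b c _ HU Hp E (diff_n_is_pd n d f a b c Hf Hp)).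
  - intro d. apply (IHn (pd d f)); [|apply Hf].
    intros x y z Hp. symmetry. apply is_pd_unique.
    exact (is_pd_local U d f g x y z _ HU Hp E (diff_n_is_pd n d f x y z Hf Hp)).
Qed.

Lemma diff_n_succ n f (f' : nat -> F3) :
  (forall d a b c, U a b c -> is_pd d f a b c (f' d a b c)) ->
  (forall d, diff_n n (f' d)) -> diff_n (S n) f.
Proof.
  intros Hf Hf'. split.
  - intros d a b c Hp. exists (f' d a b c). exact (Hf d a b c Hp).
  - intro d. apply (diff_n_ext n (f' d)); [|apply Hf'].
    intros x y z Hp. symmetry. exact (is_pd_unique (Hf d x y z Hp)).
Qed.

Lemma diff_n_const n k : diff_n n (fun _ _ _ => k).
Proof.
  revert k; induction n as [|n IHn]; intro k; [exact I|].
  apply (diff_n_succ n _ (fun _ _ _ _ => 0)); [intros; apply is_pd_const|intros; apply IHn].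
Qed.

Lemma diff_n_plus n : forall f g, diff_n n f -> diff_n n g ->
  diff_n n (fun x y z => f x y z + g x y z).
Proof.
  induction n as [|n IHn]; intros f g Hf Hg; [exact I|].
  apply (diff_n_succ n _ (fun d x y z => pd d f x y z + pd d g x y z)).
  - intros d a b c Hp. apply is_pd_plus; eapply diff_n_is_pd; eauto.
  - intro d. apply IHn; [apply Hf|apply Hg].
Qed.

Lemma diff_n_mult n : forall f g, diff_n n f -> diff_n n g ->
  diff_n n (fun x y z => f x y z * g x y z).
Proof.
  induction n as [|n IHn]; intros f g Hf Hg; [exact I|].
  apply (diff_n_succ n _ (fun d x y z => pd d f x y z * g x y z + f x y z * pd d g x y z)).
  - intros d a b c Hp. apply is_pd_mult; eapply diff_n_is_pd; eauto.
  - intro d. apply diff_n_plus; apply IHn;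
      solve [apply Hf | apply Hg | apply diff_n_S; assumption].
Qed.

Lemma diff_n_opp n f : diff_n n f -> diff_n n (fun x y z => - f x y z).
Proof.
  intro Hf. apply (diff_n_ext n (fun x y z => -1 * f x y z)); [intros; ring|].
  apply diff_n_mult; [apply diff_n_const|exact Hf].
Qed.

Lemma diff_n_minus n f g : diff_n n f -> diff_n n g ->
  diff_n n (fun x y z => f x y z - g x y z).
Proof.
  intros Hf Hg. apply (diff_n_ext n (fun x y z => f x y z + - g x y z)); [intros; ring|].
  apply diff_n_plus; [exact Hf|apply diff_n_opp, Hg].
Qed.

Lemma diff_n_inv n : forall f, (forall x y z, U x y z -> f x y z <> 0) ->
  diff_n n f -> diff_n n (fun x y z => / f x y z).
Proof.
  induction n as [|n IHn]; intros f Hnz Hf; [exact I|].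
  apply (diff_n_succ n _ (fun d x y z => - pd d f x y z * (/ f x y z * / f x y z))).
  - intros d a b c Hp.
    replace (- pd d f a b c * (/ f a b c * / f a b c)) with (- pd d f a b c / f a b c ^ 2)
      by (field; apply Hnz, Hp).
    apply is_pd_inv; [eapply diff_n_is_pd; eauto|apply Hnz, Hp].
  - intro d. apply diff_n_mult; [apply diff_n_opp, Hf|].
    apply diff_n_mult; apply IHn; auto using diff_n_S.
Qed.

Lemma diff_n_sqrt n : forall f, (forall x y z, U x y z -> 0 < f x y z) ->
  diff_n n f -> diff_n n (fun x y z => sqrt (f x y z)).
Proof.
  induction n as [|n IHn]; intros f Hpos Hf; [exact I|].
  apply (diff_n_succ n _ (fun d x y z => pd d f x y z * / (2 * sqrt (f x y z)))).
  - intros d a b c Hp. apply is_pd_sqrt; [eapply diff_n_is_pd; eauto|apply Hpos, Hp].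
  - intro d. apply diff_n_mult; [apply Hf|].
    apply diff_n_inv.
    + intros x y z Hp. pose proof (sqrt_lt_R0 _ (Hpos x y z Hp)). lra.
    + apply diff_n_mult; [apply diff_n_const|apply IHn; auto using diff_n_S].
Qed.

Lemma diff_inf_const k : diff_inf (fun _ _ _ => k).
Proof. intro; apply diff_n_const. Qed.

Lemma diff_inf_plus f g : diff_inf f -> diff_inf g -> diff_inf (fun x y z => f x y z + g x y z).
Proof. intros Hf Hg n; apply diff_n_plus; auto. Qed.

Lemma diff_inf_minus f g : diff_inf f -> diff_inf g -> diff_inf (fun x y z => f x y z - g x y z).
Proof. intros Hf Hg n; apply diff_n_minus; auto. Qed.

Lemma diff_inf_opp f : diff_inf f -> diff_inf (fun x y z => - f x y z).
Proof. intros Hf n; apply diff_n_opp; auto. Qed.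

Lemma diff_inf_mult f g : diff_inf f -> diff_inf g -> diff_inf (fun x y z => f x y z * g x y z).
Proof. intros Hf Hg n; apply diff_n_mult; auto. Qed.

Lemma diff_inf_div f g : (forall x y z, U x y z -> g x y z <> 0) ->
  diff_inf f -> diff_inf g -> diff_inf (fun x y z => f x y z / g x y z).
Proof. intros Hnz Hf Hg n; apply diff_n_mult, diff_n_inv; auto. Qed.

Lemma diff_inf_sqrt f : (forall x y z, U x y z -> 0 < f x y z) ->
  diff_inf f -> diff_inf (fun x y z => sqrt (f x y z)).
Proof. intros Hpos Hf n; apply diff_n_sqrt; auto. Qed.

Lemma diff_inf_pd d f : diff_inf f -> diff_inf (pd d f).
Proof. intros Hf n. apply (Hf (S n)). Qed.

Lemma diff_inf_has_pd d f a b c : diff_inf f -> U a b c -> has_pd d f a b c.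
Proof. intros Hf Hp. exact (proj1 (Hf 1%nat) d a b c Hp). Qed.

Lemma iter_pd_app ds d f : iter_pd (ds ++ d :: nil) f = iter_pd ds (pd d f).
Proof. induction ds as [|d' ds IH]; simpl; [reflexivity|now rewrite IH]. Qed.

Lemma smooth_on_has_pd ds f d a b c : smooth_on U f -> U a b c -> has_pd d (iter_pd ds f) a b c.
Proof.
  intros Hs Hp. destruct (Hs ds a b c Hp) as [_ H].
  destruct d as [|[|d]]; [apply H; lia|apply H; lia|exact (H 2%nat ltac:(lia))].
Qed.

Lemma smooth_on_diff_inf f : smooth_on U f -> diff_inf f.
Proof.
  intros Hs n. revert f Hs. induction n as [|n IHn]; intros f Hs; [exact I|]. split.
  - intros d a b c Hp. exact (smooth_on_has_pd nil f d a b c Hs Hp).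
  - intro d. apply IHn. intros ds a b c Hp. rewrite <- iter_pd_app. apply Hs, Hp.
Qed.

End InfiniteDifferentiability.

Lemma Derive_eq_deriv1 g x : (exists l, derivable_pt_lim g x l) -> Derive g x = deriv1 g x.
Proof.
  intros [l H]. rewrite (deriv1_unique g x l H).
  apply is_derive_unique, is_derive_Reals, H.
Qed.

Lemma ex_derive_of_lim g x : (exists l, derivable_pt_lim g x l) -> ex_derive g x.
Proof. intros [l H]. exists l. apply is_derive_Reals, H. Qed.

Lemma locally_2d_mono (P Q : R -> R -> Prop) x y :
  (forall u v, P u v -> Q u v) -> locally_2d P x y -> locally_2d Q x y.
Proof. intros HPQ [del H]. exists del. intros u v Hu Hv. exact (HPQ u v (H u v Hu Hv)). Qed.

Lemma locally_2d_swap P x y : locally_2d P x y -> locally_2d (fun u v => P v u) y x.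
Proof. intros [del H]. exists del. intros u v Hu Hv. exact (H v u Hv Hu). Qed.

Definition mixed_partial_exists (g : R -> R -> R) (u v : R) : Prop :=
  (exists l, derivable_pt_lim (fun t => g u t) v l)
  /\ (exists l, derivable_pt_lim (fun z => deriv1 (fun t => g z t) v) u l).

Definition mixed_partials_exist (g : R -> R -> R) (u v : R) : Prop :=
  mixed_partial_exists g u v /\ mixed_partial_exists (fun t z => g z t) v u.

Lemma Derive_eq_deriv1_mixed_loc (g : R -> R -> R) x y :
  locally_2d (mixed_partial_exists g) x y ->
  locally_2d (fun u v =>
    Derive (fun z => Derive (fun t => g z t) v) u = deriv1 (fun z => deriv1 (fun t => g z t) v) u
    /\ ex_derive (fun z => Derive (fun t => g z t) v) u) x y.
Proof.
  intro H. refine (locally_2d_impl_strong _ _ _ _ (locally_2d_forall _ x y _) H).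
  intros u v Hloc.
  assert (E : locally u (fun z => deriv1 (fun t => g z t) v = Derive (fun t => g z t) v)).
  { eapply filter_imp; [|exact (locally_2d_1d_const_y _ _ _ Hloc)].
    intros z [Hz _]. symmetry. apply Derive_eq_deriv1, Hz. }
  destruct (locally_2d_singleton _ _ _ Hloc) as [_ Hmixed]. split.
  - rewrite <- (Derive_eq_deriv1 _ _ Hmixed). apply Derive_ext_loc.
    eapply filter_imp; [|exact E]. intros z Hz. symmetry. exact Hz.
  - apply (ex_derive_ext_loc _ _ _ E), ex_derive_of_lim, Hmixed.
Qed.

(* Coquelicot's Schwarz theorem, transported from [Derive] to [deriv1]: the two agree wherever
   the derivative exists, hence on a neighbourhood of (x, y). *)
Lemma deriv1_Schwarz (g : R -> R -> R) x y :
  locally_2d (mixed_partials_exist g) x y ->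
  continuity_2d_pt (fun u v => deriv1 (fun z => deriv1 (fun t => g z t) v) u) x y ->
  continuity_2d_pt (fun u v => deriv1 (fun z => deriv1 (fun t => g t z) u) v) x y ->
  deriv1 (fun z => deriv1 (fun t => g z t) y) x = deriv1 (fun z => deriv1 (fun t => g t z) x) y.
Proof.
  intros Hd Hc1 Hc2.
  assert (E1 := Derive_eq_deriv1_mixed_loc g x y (locally_2d_mono _ _ _ _ (fun u v H => proj1 H) Hd)).
  assert (E2 := locally_2d_swap _ _ _ (Derive_eq_deriv1_mixed_loc (fun t z => g z t) y x
    (locally_2d_swap _ _ _ (locally_2d_mono _ _ _ _ (fun u v H => proj2 H) Hd)))).
  destruct (locally_2d_singleton _ _ _ E1) as [<- _].
  destruct (locally_2d_singleton _ _ _ E2) as [<- _].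
  apply Schwarz.
  - refine (locally_2d_mono _ _ _ _ _ (locally_2d_and _ _ _ _ Hd (locally_2d_and _ _ _ _ E1 E2))).
    intros u v [[[H1 _] [H2 _]] [[_ H3] [_ H4]]].
    repeat split; [apply ex_derive_of_lim, H2|apply ex_derive_of_lim, H1|exact H3|exact H4].
  - refine (continuity_2d_pt_ext_loc _ _ _ _ (locally_2d_mono _ _ _ _ _ E1) Hc1).
    intros u v H. symmetry. apply H.
  - refine (continuity_2d_pt_ext_loc _ _ _ _ (locally_2d_mono _ _ _ _ _ E2) Hc2).
    intros u v H. symmetry. apply H.
Qed.

Lemma box_locally_2d_slices (P : R -> R -> R -> Prop) a b c del : 0 < del ->
  (forall x y z, Rabs (x - a) < del -> Rabs (y - b) < del -> Rabs (z - c) < del -> P x y z) ->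
  locally_2d (fun u v => P u v c) a b /\ locally_2d (fun u v => P u b v) a c
  /\ locally_2d (fun u v => P a u v) b c.
Proof.
  intros Hdel H. pose proof (Rabs_sub_diag_lt a del Hdel).
  pose proof (Rabs_sub_diag_lt b del Hdel); pose proof (Rabs_sub_diag_lt c del Hdel).
  repeat split; exists (mkposreal del Hdel); intros u v Hu Hv; apply H; assumption.
Qed.

Lemma cont3_at_slices F a b c : cont3_at F a b c ->
  continuity_2d_pt (fun u v => F u v c) a b /\ continuity_2d_pt (fun u v => F u b v) a c
  /\ continuity_2d_pt (fun u v => F a u v) b c.
Proof.
  intro H.
  repeat split; intro eps; destruct (H eps (cond_pos eps)) as [del [Hdel Hbox]];
    apply (box_locally_2d_slices _ _ _ _ _ Hdel Hbox).
Qed.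

Lemma smooth_on_mixed_partials U f d e x y z : smooth_on U f -> U x y z ->
  (has_pd e f x y z /\ has_pd d (pd e f) x y z) /\ (has_pd d f x y z /\ has_pd e (pd d f) x y z).
Proof.
  intros Hs Hp. repeat split;
    solve [exact (smooth_on_has_pd U nil f _ x y z Hs Hp)
          | exact (smooth_on_has_pd U (e :: nil) f d x y z Hs Hp)
          | exact (smooth_on_has_pd U (d :: nil) f e x y z Hs Hp)].
Qed.

Lemma pd_comm U f d e a b c : open3 U -> smooth_on U f -> U a b c ->
  (d < 3)%nat -> (e < 3)%nat -> pd d (pd e f) a b c = pd e (pd d f) a b c.
Proof.
  intros HU Hs Hp Hd He.
  assert (Hlt : forall d e, (d < e < 3)%nat -> pd d (pd e f) a b c = pd e (pd d f) a b c).
  { clear d e Hd He. intros d e Hde.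
    destruct (HU a b c Hp) as [del [Hdel Hbox]].
    destruct (box_locally_2d_slices U a b c del Hdel Hbox) as (U01 & U02 & U12).
    pose proof (fun ds => cont3_at_slices _ a b c (proj1 (Hs ds a b c Hp))) as Hcont.
    pose proof (fun x y z => smooth_on_mixed_partials U f d e x y z Hs) as Hpart.
    (* In each case both sides are, by conversion, mixed derivatives of the plane slice of f
       through (a, b, c) spanned by the directions d and e. *)
    destruct d as [|[|[|]]], e as [|[|[|]]]; try lia.
    - exact (deriv1_Schwarz (fun u v => f u v c) a b
        (locally_2d_mono _ _ _ _ (fun u v => Hpart u v c) U01)
        (proj1 (Hcont (0 :: 1 :: nil)%nat)) (proj1 (Hcont (1 :: 0 :: nil)%nat))).
    - exact (deriv1_Schwarz (fun u v => f u b v) a c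
        (locally_2d_mono _ _ _ _ (fun u v => Hpart u b v) U02)
        (proj1 (proj2 (Hcont (0 :: 2 :: nil)%nat))) (proj1 (proj2 (Hcont (2 :: 0 :: nil)%nat)))).
    - exact (deriv1_Schwarz (fun u v => f a u v) b c
        (locally_2d_mono _ _ _ _ (fun u v => Hpart a u v) U12)
        (proj2 (proj2 (Hcont (1 :: 2 :: nil)%nat))) (proj2 (proj2 (Hcont (2 :: 1 :: nil)%nat)))). }
  destruct (Nat.lt_total d e) as [Hde|[<-|Hed]];
    [apply Hlt; lia|reflexivity|symmetry; apply Hlt; lia].
Qed.

Create HintDb diff_inf.
#[local] Hint Extern 1 (_ < _)%nat => lia : diff_inf.

Ltac diff_inf_closure :=
  repeat first [ solve [auto with diff_inf]
               | apply diff_inf_plus | apply diff_inf_minus | apply diff_inf_mult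
               | apply diff_inf_opp | apply diff_inf_const | apply diff_inf_pd ].

Section SurfaceFields.
Variable U : R -> R -> R -> Prop.
Hypothesis HU : open3 U.
Variable X : nat -> F3.
Hypothesis HX : forall i, (i < 3)%nat -> diff_inf U (X i).
Hypothesis Hnz : forall a b c, U a b c -> sum3 (fun j => crossS X j a b c ^ 2) <> 0.
#[local] Hint Resolve HU HX : diff_inf.

Lemma metdet_eq a b c : metdet X a b c = sum3 (fun j => crossS X j a b c ^ 2).
Proof. unfold metdet, met, sum3, crossS, cross. simpl. ring. Qed.

Lemma cross_norm2_pos a b c : U a b c -> 0 < sum3 (fun j => crossS X j a b c ^ 2).
Proof.
  intro Hp. pose proof (Hnz a b c Hp) as H. unfold sum3 in *.
  pose proof (pow2_ge_0 (crossS X 0 a b c)); pose proof (pow2_ge_0 (crossS X 1 a b c));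
  pose proof (pow2_ge_0 (crossS X 2 a b c)). lra.
Qed.

Lemma diff_inf_met al be : diff_inf U (met X al be).
Proof. unfold met, sum3, Sv. diff_inf_closure. Qed.
#[local] Hint Resolve diff_inf_met : diff_inf.

Lemma diff_inf_imet al be : diff_inf U (imet X al be).
Proof.
  unfold imet. apply (diff_inf_div U HU).
  - intros x y z Hp. rewrite metdet_eq. apply Hnz, Hp.
  - destruct (Nat.eqb al be); diff_inf_closure.
  - unfold metdet. diff_inf_closure.
Qed.
#[local] Hint Resolve diff_inf_imet : diff_inf.

Lemma diff_inf_Sup al i : (i < 3)%nat -> diff_inf U (Sup X al i).
Proof. intro. unfold Sup, sum2, Sv. diff_inf_closure. Qed.
#[local] Hint Resolve diff_inf_Sup : diff_inf.

Lemma diff_inf_Chr ga al be : diff_inf U (Chr X ga al be).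
Proof. unfold Chr, sum3, Sv. diff_inf_closure. Qed.
#[local] Hint Resolve diff_inf_Chr : diff_inf.

Lemma diff_inf_Nv i : diff_inf U (Nv X i).
Proof.
  assert (Hcross : forall j, diff_inf U (crossS X j)).
  { intro j. unfold crossS, cross, Sv. destruct j as [|[|j]]; diff_inf_closure. }
  unfold Nv. apply (diff_inf_div U HU); [|apply Hcross|].
  - intros x y z Hp. pose proof (sqrt_lt_R0 _ (cross_norm2_pos x y z Hp)). lra.
  - apply (diff_inf_sqrt U HU); [exact cross_norm2_pos|].
    unfold sum3; simpl. diff_inf_closure; apply Hcross.
Qed.
#[local] Hint Resolve diff_inf_Nv : diff_inf.

Lemma diff_inf_Vup al : diff_inf U (Vup X al).
Proof. unfold Vup, Vel, sum3. diff_inf_closure. Qed.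
#[local] Hint Resolve diff_inf_Vup : diff_inf.

Lemma diff_inf_dotChr al be : diff_inf U (dotChr X al be).
Proof. unfold dotChr, covU, Cn, Bmix, Vel, sum2, sum3. diff_inf_closure. Qed.

End SurfaceFields.

#[local] Hint Resolve diff_inf_Chr diff_inf_Vup diff_inf_dotChr : diff_inf.

Lemma Chr_sym U X ga al be a b c : open3 U -> (forall i, (i < 3)%nat -> smooth_on U (X i)) ->
  U a b c -> (al < 3)%nat -> (be < 3)%nat -> Chr X ga al be a b c = Chr X ga be al a b c.
Proof.
  intros HU HX Hp Hal Hbe. unfold Chr, Sv, sum3.
  rewrite !(pd_comm U (X _) al be a b c) by auto. reflexivity.
Qed.

Ltac has_pd_by_diff_inf U Hp := apply (diff_inf_has_pd U); [diff_inf_closure|exact Hp].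

Theorem mainTheorem1
  (U : R -> R -> R -> Prop) (X : nat -> F3) (psi : nat -> F3) :
  open3 U ->
  (forall i, (i < 3)%nat -> smooth_on U (X i)) ->
  (forall a b c, U a b c -> sum3 (fun j => crossS X j a b c ^ 2) <> 0) ->
  (forall be, (be < 2)%nat -> smooth_on U (psi be)) ->
  forall (al be : nat) (a b c : R), (al < 2)%nat -> (be < 2)%nat -> U a b c ->
    dotnab11 X (nablaPsi X psi) be al a b c - covU X (dotnabU X psi) al be a b c
    = sum2 (fun ga => dotR X be al ga a b c * psi ga a b c)
      + Cn X a b c * sum2 (fun ga => Bmix X ga al a b c * covU X psi ga be a b c).
Proof.
  intros HU HXs Hnz Hpsis al be a b c Hal Hbe Hp.
  assert (HX : forall i, (i < 3)%nat -> diff_inf U (X i))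
    by (intros; apply smooth_on_diff_inf; auto).
  assert (Hpsi : forall i, (i < 2)%nat -> diff_inf U (psi i))
    by (intros; apply smooth_on_diff_inf; auto).
  unfold dotnab11, nablaPsi, dotnabU, dotR, cov11, covU, Riem, sum2.
  (* Keep the coefficient fields folded, so that only the products visible in the
     definitions are expanded by the Leibniz rule. *)
  with_strategy opaque [Chr Vup dotChr]
    (repeat first [ rewrite pd_plus by has_pd_by_diff_inf U Hp
                  | rewrite pd_minus by has_pd_by_diff_inf U Hp
                  | rewrite pd_mult by has_pd_by_diff_inf U Hp ]).
  rewrite (pd_comm U (psi be) al 0 a b c), (pd_comm U (psi be) al 1 a b c),
    (pd_comm U (psi be) al 2 a b c) by (auto; lia).
  rewrite (Chr_sym U X 0 0 al), (Chr_sym U X 0 1 al), (Chr_sym U X 1 0 al),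
    (Chr_sym U X 1 1 al) by (auto; lia).
  unfold dotChr, covU, sum2. ring.
Qed.
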